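(* Consider the sequences generated by Algorithm PS under (A1)–(A7), let $p^k:=(z^k,w_1^k,\dots,w_{n-1}^k)$, and for each $k\ge0$ define the function $\varphi_k:\boldsymbol{\mathcal H}\to\mathbb R$ by $$\varphi_k(z,w_1,\dots,w_{n-1}):=\langle z,v^k\rangle+\sum_{i=1}^{n-1}\langle w_i,u_i^k\rangle-\sum_{i=1}^n\Big[\langle x_i^k,y_i^k\rangle+\tfrac1{4\beta_i}\|x_i^k-G_iz^k\|^2\Big]$$ (so the scalar $\varphi_k$ of the algorithm equals $\varphi_k(p^k)$). Then for all $k\ge0$: (a) $\varphi_k$ is affine, its gradient with respect to $\langle\cdot,\cdot\rangle_\gamma$ is $\nabla\varphi_k=(\gamma^{-1}v^k,u_1^k,\dots,u_{n-1}^k)$, and $\|\nabla\varphi_k\|_\gamma^2=\pi_k$; (b) for all $p=(z,w_1,\dots,w_{n-1})\in\boldsymbol{\mathcal H}$, with $w_n:=-\sum_{i=1}^{n-1}G_i^*w_i$, $$\varphi_k(p)=\sum_{i=1}^n\Big[\langle G_iz-x_i^k,\,y_i^k-w_i\rangle-\tfrac1{4\beta_i}\|x_i^k-G_iz^k\|^2\Big];$$ (c) $\mathcal S\subset\{p\in\boldsymbol{\mathcal H}:\varphi_k(p)\le0\}$; (d) $p^{k+1}=p^k-\tau_k\frac{\varphi_k(p^k)}{\|\nabla\varphi_k\|_\gamma^2}\nabla\varphi_k$ if $\varphi_k(p^k)>0$, and $p^{k+1}=p^k$ otherwise; (e) the sequences $(z^k)$ and $(w_i^k)$, $i=1,\dots,n$,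 are bounded.
   Context: Standing setting. Let $\mathcal H_0,\dots,\mathcal H_{n-1}$ be real Hilbert spaces ($n\ge2$) and $\mathcal H_n:=\mathcal H_0$. Conventions: $0\cdot\infty=0$, $r\cdot\infty=\infty$ for $r>0$, $1/\infty=0$, $1/0=\infty$. For each $i=1,\dots,n$: (A1) $G_i:\mathcal H_0\to\mathcal H_i$ is bounded linear and $G_n=I$; (A2) $A_i:\mathcal H_i\rightrightarrows\mathcal H_i$ is maximal monotone; (A3) $B_i:\mathcal H_i\to\mathcal H_i$ is monotone and $\ell_i$-Lipschitz, $\ell_i\in[0,\infty)$; (A4) $C_i:\mathcal H_i\to\mathcal H_i$ is $\beta_i$-cocoercive with $\beta_i\in(0,\infty]$, i.e. $\langle x-y,C_ix-C_iy\rangle\ge\beta_i\|C_ix-C_iy\|^2$ for all $x,y$ (so $\beta_i=\infty$ means $C_i$ is constant, and then $1/(4\beta_i)=0$); (A5) $D_i:\mathcal H_i\to\mathcal H_i$ is monotone and continuously differentiable with $\|D_i'(x)-D_i'(y)\|\le m_i\|x-y\|$ for all $x,y$, $m_i\in[0,\infty)$; (A6) with $T_i:=A_i+B_i+C_i+D_i$, the inclusion $0\in\sum_{i=1}^nG_i^*T_i(G_iz)$ has at least one solution $z\in\mathcal H_0$; (A7) there is $\mathcal I_D\subset\{1,\dots,n\}$ with $m_i>0$ for $i\in\mathcal I_D$ and $m_i=0$, $D_i=0$ for $i\notin\mathcal I_D$. Notation: $D_{i,(u)}(x):=D_i(u)+D_i'(u)(x-u)$; for a maximal monotone $S$, $J_S:=(S+I)^{-1}$.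 $\boldsymbol{\mathcal H}:=\mathcal H_0\times\mathcal H_1\times\cdots\times\mathcal H_{n-1}$ with inner product $\langle p,\tilde p\rangle_\gamma:=\gamma\langle z,\tilde z\rangle+\sum_{i=1}^{n-1}\langle w_i,\tilde w_i\rangle$ for $p=(z,w_1,\dots,w_{n-1})$, $\tilde p=(\tilde z,\tilde w_1,\dots,\tilde w_{n-1})$, and norm $\|\cdot\|_\gamma$; for such $p$ one writes $w_n:=-\sum_{i=1}^{n-1}G_i^*w_i$. The extended solution set is $\mathcal S:=\{p\in\boldsymbol{\mathcal H}: w_i\in T_i(G_iz),\ i=1,\dots,n\}$ (with $w_n$ as just defined). Algorithm PS. Input: $(z^0,w_1^0,\dots,w_{n-1}^0)\in\boldsymbol{\mathcal H}$, $0<\underline\tau<\overline\tau<2$, $0<\underline\theta<\overline\theta<2$, $\hat\rho>0$, $\hat\delta>0$, $\gamma>0$; $w_n^0:=-\sum_{i=1}^{n-1}G_i^*w_i^0$. For $k=0,1,2,\dots$: for each $i=1,\dots,n$ define $(\rho_i^k,x_i^k,y_i^k)$ as follows. (i) If $w_i^k\in T_i(G_iz^k)$: $\rho_i^k=\hat\rho$, $x_i^k=G_iz^k$, $y_i^k=w_i^k$. (ii) Otherwise, if $i\in\mathcal I_D$: $\rho_i^k>0$ and $x_i^k=J_{\rho_i^k(A_i+D_{i,(G_iz^k)})}\big(G_iz^k+\rho_i^kw_i^k-\rho_i^k(B_i+C_i)(G_iz^k)\big)$ satisfy $\underline\theta\le4\ell_i^2(\rho_i^k)^2+(\beta_i^{-1}+\hat\delta)\rho_i^k+(m_i\rho_i^k\|x_i^k-G_iz^k\|)^2\le\overline\theta$,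 and $y_i^k=\frac{G_iz^k-x_i^k}{\rho_i^k}+w_i^k+[B_i(x_i^k)-B_i(G_iz^k)]+[D_i(x_i^k)-D_{i,(G_iz^k)}(x_i^k)]$. (iii) Otherwise ($i\notin\mathcal I_D$): some $\rho_i^k>0$ is chosen, $x_i^k=J_{\rho_i^kA_i}\big(G_iz^k+\rho_i^kw_i^k-\rho_i^k(B_i+C_i)(G_iz^k)\big)$ and $y_i^k=\frac{G_iz^k-x_i^k}{\rho_i^k}+w_i^k+[B_i(x_i^k)-B_i(G_iz^k)]$. Then set $u_i^k=x_i^k-G_ix_n^k$ ($i=1,\dots,n-1$), $v^k=\sum_{i=1}^nG_i^*y_i^k$, $\varphi_k=\langle z^k,v^k\rangle+\sum_{i=1}^{n-1}\langle w_i^k,u_i^k\rangle-\sum_{i=1}^n\big[\langle x_i^k,y_i^k\rangle+\frac1{4\beta_i}\|x_i^k-G_iz^k\|^2\big]$, $\pi_k=\gamma^{-1}\|v^k\|^2+\sum_{i=1}^{n-1}\|u_i^k\|^2$. If $\varphi_k>0$: choose $\tau_k\in[\underline\tau,\overline\tau]$, $\alpha_k=\tau_k\varphi_k/\pi_k$, $z^{k+1}=z^k-\gamma^{-1}\alpha_kv^k$, $w_i^{k+1}=w_i^k-\alpha_ku_i^k$ ($i=1,\dots,n-1$); otherwise $z^{k+1}=z^k$, $w_i^{k+1}=w_i^k$. Finally $w_n^{k+1}=-\sum_{i=1}^{n-1}G_i^*w_i^{k+1}$. *)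

From HB Require Import structures.
From mathcomp Require Import all_boot all_order all_algebra.
From mathcomp Require Import boolp classical_sets reals constructive_ereal.

Set Implicit Arguments.
Unset Strict Implicit.
Unset Printing Implicit Defensive.

Import Order.TTheory GRing.Theory Num.Theory.
Local Open Scope ring_scope.

HB.mixin Record Lmodule_isInner (R : realType) V of GRing.Lmodule R V := {
  inner : V -> V -> R;
  innerC : forall x y : V, inner x y = inner y x;
  innerDl : forall x y z : V, inner (x + y) z = inner x z + inner y z;
  innerZl : forall (a : R) (x y : V), inner (a *: x) y = a * inner x y;
  inner_ge0 : forall x : V, 0 <= inner x x;
  inner_eq0 : forall x : V, inner x x = 0 -> x = 0
}.

#[short(type="preHilbertType")]
HB.structure Definition PreHilbert (R : realType) :=
  {V of Lmodule_isInner R V & GRing.Lmodule R V}.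

Definition hnorm (R : realType) (V : preHilbertType R) (x : V) : R :=
  Num.sqrt (inner x x).

Definition hcauchy (R : realType) (V : preHilbertType R) (u : nat -> V) :=
  forall e : R, 0 < e -> exists N : nat, forall p q : nat,
    (N <= p)%N -> (N <= q)%N -> hnorm (u p - u q) < e.

Definition hconverges (R : realType) (V : preHilbertType R) (u : nat -> V)
  (l : V) :=
  forall e : R, 0 < e -> exists N : nat, forall p : nat,
    (N <= p)%N -> hnorm (u p - l) < e.

HB.mixin Record PreHilbert_isComplete (R : realType) V of PreHilbert R V := {
  hcomplete : forall u : nat -> V, hcauchy u -> exists l : V, hconverges u l
}.

#[short(type="hilbertType")]
HB.structure Definition Hilbert (R : realType) :=
  {V of PreHilbert_isComplete R V & PreHilbert R V}.

Section Operators.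
Variables (R : realType) (E : hilbertType R).

(* set-valued operator A : E ⇉ E ; v ∈ A x is written  A x v *)
Definition monotone_op (A : E -> set E) : Prop :=
  forall x y u v, A x u -> A y v -> 0 <= inner (x - y) (u - v).

Definition maximal_monotone (A : E -> set E) : Prop :=
  monotone_op A /\
  forall x u, (forall y v, A y v -> 0 <= inner (x - y) (u - v)) -> A x u.

Definition monotone_fun (B : E -> E) : Prop :=
  forall x y, 0 <= inner (x - y) (B x - B y).

Definition lipschitz_with (l : R) (B : E -> E) : Prop :=
  forall x y, hnorm (B x - B y) <= l * hnorm (x - y).

(* beta-cocoercive with beta in (0, +oo]; beta = +oo means C is constant *)
Definition cocoercive (beta : \bar R) (C : E -> E) : Prop :=
  match beta with
  | r%:E => forall x y, r * hnorm (C x - C y) ^+ 2 <= inner (x - y) (C x - C y)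
  | +oo%E => forall x y, C x = C y
  | -oo%E => False
  end.

Definition is_linear (F : hilbertType R) (L : E -> F) : Prop :=
  forall (a : R) (x y : E), L (a *: x + y) = a *: L x + L y.

Definition is_bounded_linear (F : hilbertType R) (L : E -> F) : Prop :=
  is_linear L /\ exists c : R, forall x, hnorm (L x) <= c * hnorm x.

Definition is_adjoint (F : hilbertType R) (L : E -> F) (Ls : F -> E) : Prop :=
  forall x y, inner (L x) y = inner x (Ls y).

Definition frechet_derivative (D : E -> E) (D' : E -> E -> E) : Prop :=
  forall x, is_bounded_linear (D' x) /\
    forall e : R, 0 < e -> exists d : R, 0 < d /\ forall h : E,
      hnorm h < d -> hnorm (D (x + h) - D x - D' x h) <= e * hnorm h.

Definition derivative_continuous (D' : E -> E -> E) : Prop :=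
  forall x (e : R), 0 < e -> exists d : R, 0 < d /\ forall y,
    hnorm (y - x) < d -> forall h, hnorm (D' y h - D' x h) <= e * hnorm h.

Definition derivative_lipschitz (m : R) (D' : E -> E -> E) : Prop :=
  forall x y h, hnorm (D' x h - D' y h) <= m * hnorm (x - y) * hnorm h.

(* data attached to one index i : A_i, B_i, C_i, D_i, D_i', l_i, beta_i, m_i,
   and the boolean (i \in I_D) *)
Record opdata := OpData {
  oA : E -> set E;
  oB : E -> E;
  oC : E -> E;
  oD : E -> E;
  oD' : E -> E -> E;
  oell : R;
  obeta : \bar R;
  om : R;
  oinD : bool
}.

Definition admissible (d : opdata) : Prop :=
  [/\ maximal_monotone (oA d),
      monotone_fun (oB d) /\ 0 <= oell d /\ lipschitz_with (oell d) (oB d),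
      (0 < obeta d)%E /\ cocoercive (obeta d) (oC d),
      [/\ monotone_fun (oD d), frechet_derivative (oD d) (oD' d),
          derivative_continuous (oD' d), 0 <= om d &
          derivative_lipschitz (om d) (oD' d)] &
      (oinD d -> 0 < om d) /\
      (~~ oinD d -> om d = 0 /\ forall x, oD d x = 0)].

(* w \in T(x) where T = A + B + C + D *)
Definition inT (d : opdata) (x w : E) : Prop :=
  oA d x (w - oB d x - oC d x - oD d x).

Definition Dlin (d : opdata) (u x : E) : E := oD d u + oD' d u (x - u).

(* 1/beta and 1/(4 beta), with 1/(+oo) = 0 *)
Definition inv_beta (beta : \bar R) : R :=
  match beta with r%:E => r^-1 | _ => 0 end.
Definition inv4_beta (beta : \bar R) : R :=
  match beta with r%:E => (4 * r)^-1 | _ => 0 end.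

Definition op_add (A : E -> set E) (L : E -> E) : E -> set E :=
  fun x v => exists a, A x a /\ v = a + L x.

Definition op_scale (rho : R) (S : E -> set E) : E -> set E :=
  fun x v => exists s, S x s /\ v = rho *: s.

(* resolvent_pt S y x  <->  x = J_S(y) = (S + I)^{-1} y, i.e. y \in x + S x
   (J_S is single-valued whenever S is monotone) *)
Definition resolvent_pt (S : E -> set E) (y x : E) : Prop := S x (y - x).

End Operators.

Section Block.
Variables (R : realType) (H0 E : hilbertType R).

Definition ps_block (thl thh rhohat deltahat : R) (G : H0 -> E)
    (d : opdata E) (zk : H0) (wk : E) (rho : R) (x y : E) : Prop :=
  let u := G zk in
  let s := u + rho *: wk - rho *: (oB d u + oC d u) in
  (inT d u wk -> [/\ rho = rhohat, x = u & y = wk]) /\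
  (~ inT d u wk -> oinD d ->
     [/\ 0 < rho,
         resolvent_pt (op_scale rho (op_add (oA d) (Dlin d u))) s x,
         thl <= 4 * oell d ^+ 2 * rho ^+ 2 + (inv_beta (obeta d) + deltahat) * rho
                + (om d * rho * hnorm (x - u)) ^+ 2 <= thh &
         y = rho^-1 *: (u - x) + wk + (oB d x - oB d u) + (oD d x - Dlin d u x)])
  /\
  (~ inT d u wk -> ~~ oinD d ->
     [/\ 0 < rho,
         resolvent_pt (op_scale rho (oA d)) s x &
         y = rho^-1 *: (u - x) + wk + (oB d x - oB d u)]).

End Block.

(* indices i = 1..n-1 are represented by i : 'I_n.-1 (ordinal j <-> i = j+1) *)

Section Product.
Variables (R : realType) (n : nat) (H0 : hilbertType R)
  (Hs : 'I_n.-1 -> hilbertType R).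

Definition prodH : Type := (H0 * (forall i : 'I_n.-1, Hs i))%type.

Definition padd (p q : prodH) : prodH := (p.1 + q.1, fun i => p.2 i + q.2 i).
Definition psub (p q : prodH) : prodH := (p.1 - q.1, fun i => p.2 i - q.2 i).
Definition pscale (t : R) (p : prodH) : prodH := (t *: p.1, fun i => t *: p.2 i).

Definition ipg (gamma : R) (p q : prodH) : R :=
  gamma * inner p.1 q.1 + \sum_(i < n.-1) inner (p.2 i) (q.2 i).
Definition pnorm (gamma : R) (p : prodH) : R := Num.sqrt (ipg gamma p p).

Definition affine_fun (f : prodH -> R) : Prop :=
  forall (t : R) (p q : prodH),
    f (padd (pscale t p) (pscale (1 - t) q)) = t * f p + (1 - t) * f q.

Definition is_gradient (gamma : R) (f : prodH -> R) (g : prodH) : Prop :=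
  forall (p : prodH) (e : R), 0 < e -> exists d : R, 0 < d /\ forall h : prodH,
    pnorm gamma h < d -> `|f (padd p h) - f p - ipg gamma g h| <= e * pnorm gamma h.

Definition wn_of (Gs : forall i, Hs i -> H0) (p : prodH) : H0 :=
  - \sum_(i < n.-1) @Gs i (p.2 i).

Definition extsol (G : forall i, H0 -> Hs i) (Gs : forall i, Hs i -> H0)
    (d : forall i, opdata (Hs i)) (dn : opdata H0) (p : prodH) : Prop :=
  (forall i, inT (d i) (@G i p.1) (p.2 i)) /\ inT dn p.1 (wn_of Gs p).

End Product.

Section Quantities.
Variables (R : realType) (n : nat) (H0 : hilbertType R)
  (Hs : 'I_n.-1 -> hilbertType R)
  (G : forall i, H0 -> Hs i) (Gs : forall i, Hs i -> H0)
  (d : forall i, opdata (Hs i)) (dn : opdata H0)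
  (x y : nat -> forall i, Hs i) (xn yn : nat -> H0) (z : nat -> H0).

Definition ps_u (k : nat) : forall i, Hs i := fun i => x k i - @G i (xn k).
(* v^k = sum_{i=1}^n G_i^* y_i^k  (G_n^* = I) *)
Definition ps_v (k : nat) : H0 := \sum_(i < n.-1) @Gs i (y k i) + yn k.

Definition ps_phi (k : nat) (p : prodH H0 Hs) : R :=
  inner p.1 (ps_v k) + \sum_(i < n.-1) inner (p.2 i) (ps_u k i)
  - ((\sum_(i < n.-1) (inner (x k i) (y k i)
        + inv4_beta (obeta (d i)) * hnorm (x k i - @G i (z k)) ^+ 2))
     + (inner (xn k) (yn k) + inv4_beta (obeta dn) * hnorm (xn k - z k) ^+ 2)).

Definition ps_pi (gamma : R) (k : nat) : R :=
  gamma^-1 * hnorm (ps_v k) ^+ 2 + \sum_(i < n.-1) hnorm (ps_u k i) ^+ 2.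

Definition ps_grad (gamma : R) (k : nat) : prodH H0 Hs :=
  (gamma^-1 *: ps_v k, ps_u k).

End Quantities.

Definition ps_iterates (R : realType) (n : nat) (H0 : hilbertType R)
  (Hs : 'I_n.-1 -> hilbertType R)
  (G : forall i, H0 -> Hs i) (Gs : forall i, Hs i -> H0)
  (d : forall i, opdata (Hs i)) (dn : opdata H0)
  (taul tauh thl thh rhohat deltahat gamma : R)
  (z : nat -> H0) (w : nat -> forall i, Hs i)
  (rho : nat -> 'I_n.-1 -> R) (rhon : nat -> R)
  (x y : nat -> forall i, Hs i) (xn yn : nat -> H0) (tau : nat -> R) : Prop :=
  forall k : nat,
    (forall i, ps_block thl thh rhohat deltahat (G i) (d i) (z k) (w k i)
                 (rho k i) (x k i) (y k i)) /\
    ps_block thl thh rhohat deltahat id dn (z k) (wn_of Gs (z k, w k))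
      (rhon k) (xn k) (yn k) /\
    let phik := ps_phi G Gs d dn x y xn yn z k (z k, w k) in
    let vk := ps_v Gs y yn k in
    let pik := ps_pi G Gs x y xn yn gamma k in
    (0 < phik ->
       let alpha := tau k * phik / pik in
       [/\ taul <= tau k <= tauh,
           z k.+1 = z k - (gamma^-1 * alpha) *: vk &
           forall i, w k.+1 i = w k i - alpha *: ps_u G x xn k i]) /\
    (~ 0 < phik -> z k.+1 = z k /\ forall i, w k.+1 i = w k i).

(* Each block of an iteration of Algorithm PS produces a point (x_i, y_i) with
   y_i - B_i x_i - C_i (G_i z) - D_i x_i in A_i x_i.  Monotonicity of A_i, B_i, D_i
   and cocoercivity of C_i then give phi_k <= 0 on the extended solution set, so the
   affine function phi_k separates p^k from it whenever phi_k(p^k) > 0, and the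
   update is a relaxed projection onto the halfspace {phi_k <= 0} with relaxation
   tau_k in (0, 2).  Such steps are Fejer monotone in the norm ||.||_gamma with
   respect to every extended solution, which bounds z^k and the w_i^k; w_n^k is
   then bounded because the adjoints G_i^* are bounded. *)

From HB Require Import structures.
From mathcomp Require Import all_boot all_order all_algebra.
From mathcomp Require Import boolp classical_sets reals constructive_ereal.
From mathcomp Require Import ring lra.
Import Order.TTheory GRing.Theory Num.Theory.
Local Open Scope ring_scope.

Set Implicit Arguments.
Unset Strict Implicit.
Unset Printing Implicit Defensive.

Section InnerTheory.
Variables (R : realType) (V : preHilbertType R).
Implicit Types (x y c : V) (a : R).

Lemma innerDr x y c : inner x (y + c) = inner x y + inner x c.
Proof. by rewrite innerC innerDl innerC [inner c x]innerC. Qed.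

Lemma innerZr a x y : inner x (a *: y) = a * inner x y.
Proof. by rewrite innerC innerZl innerC. Qed.

Lemma inner0l y : inner (0 : V) y = 0.
Proof. by have := innerZl 0 0 y; rewrite scale0r mul0r. Qed.

Lemma inner0r x : inner x (0 : V) = 0.
Proof. by rewrite innerC inner0l. Qed.

Lemma innerNl x y : inner (- x) y = - inner x y.
Proof. by rewrite -scaleN1r innerZl mulN1r. Qed.

Lemma innerNr x y : inner x (- y) = - inner x y.
Proof. by rewrite -scaleN1r innerZr mulN1r. Qed.

Lemma innerBl x y c : inner (x - y) c = inner x c - inner y c.
Proof. by rewrite innerDl innerNl. Qed.

Lemma innerBr x y c : inner x (y - c) = inner x y - inner x c.
Proof. by rewrite innerDr innerNr. Qed.

Lemma inner_sumr (I : Type) (r : seq I) (P : pred I) (F : I -> V) x :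
  inner x (\sum_(i <- r | P i) F i) = \sum_(i <- r | P i) inner x (F i).
Proof. exact: (big_morph (inner x) (innerDr x) (inner0r x)). Qed.

Lemma inner_inj x y : (forall c, inner c x = inner c y) -> x = y.
Proof.
by move=> e; apply/eqP; rewrite -subr_eq0; apply/eqP/inner_eq0; rewrite innerBr e subrr.
Qed.

Lemma hnorm_ge0 x : 0 <= hnorm x.
Proof. exact: sqrtr_ge0. Qed.

Lemma hnorm_sqr x : hnorm x ^+ 2 = inner x x.
Proof. by rewrite sqr_sqrtr // inner_ge0. Qed.

Lemma hnormN x : hnorm (- x) = hnorm x.
Proof. by rewrite /hnorm innerNl innerNr opprK. Qed.

Lemma inner_sqr_shift x y c a :
  inner (x - a *: c - y) (x - a *: c - y) =
  inner (x - y) (x - y) - 2 * a * inner c (x - y) + a ^+ 2 * inner c c.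
Proof.
rewrite !(innerDl, innerDr, innerNl, innerNr, innerZl, innerZr).
rewrite [inner x c]innerC [inner y c]innerC [inner y x]innerC; ring.
Qed.

Lemma inner_le_hnorm x y : inner x y <= hnorm x * hnorm y.
Proof.
have [y0 | y0] := eqVneq (inner y y) 0.
  by rewrite (inner_eq0 _ y0) inner0r /hnorm inner0r sqrtr0 mulr0.
have ypos : 0 < inner y y by rewrite lt0r y0 inner_ge0.
pose t := inner x y / inner y y.
have ht : t * inner y y = inner x y by rewrite mulfVK.
(* Cauchy-Schwarz: expand [0 <= |x - t y|^2] at the minimizing [t]. *)
have := inner_ge0 (x - t *: y - 0).
rewrite inner_sqr_shift !subr0 [inner y x]innerC => h.
have cs : inner x y ^+ 2 <= (hnorm x * hnorm y) ^+ 2.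
  rewrite exprMn !hnorm_sqr -ht; rewrite -ht in h; have := mulr_ge0 (ltW ypos) h; nra.
have := mulr_ge0 (hnorm_ge0 x) (hnorm_ge0 y); nra.
Qed.

Lemma hnormD_le x y : hnorm (x + y) <= hnorm x + hnorm y.
Proof.
rewrite -(ler_pXn2r (isT : (0 < 2)%N)) ?nnegrE ?addr_ge0 ?hnorm_ge0 //.
rewrite hnorm_sqr !(innerDl, innerDr) [inner y x]innerC sqrrD !hnorm_sqr.
have := inner_le_hnorm x y; lra.
Qed.

End InnerTheory.

Section BoundedSequences.
Variables (R : realType) (V : preHilbertType R).
Implicit Types (u : nat -> V) (c : V).

Definition bounded_seq u := exists M : R, forall k, hnorm (u k) <= M.

Lemma bounded_seq_of_sqr u (M : R) :
  (forall k, hnorm (u k) ^+ 2 <= M) -> bounded_seq u.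
Proof.
move=> hM; exists (Num.sqrt M) => k.
rewrite -(ger0_norm (hnorm_ge0 (u k))) -sqrtr_sqr ler_sqrt //.
exact: le_trans (sqr_ge0 _) (hM k).
Qed.

Lemma bounded_seq_subr u c : bounded_seq (fun k => u k - c) -> bounded_seq u.
Proof.
move=> [M hM]; exists (M + hnorm c) => k.
by rewrite -[u k](subrK c); apply: le_trans (hnormD_le _ _) _; rewrite lerD2r.
Qed.

Lemma bounded_seqN u : bounded_seq u -> bounded_seq (fun k => - u k).
Proof. by move=> [M hM]; exists M => k; rewrite hnormN. Qed.

Lemma bounded_seq_sum (I : Type) (r : seq I) (P : pred I) (f : I -> nat -> V) :
  (forall i, bounded_seq (f i)) ->
  bounded_seq (fun k => \sum_(i <- r | P i) f i k).
Proof.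
move=> hf; elim: r => [|i r [M hM]].
  by exists 0 => k; rewrite big_nil /hnorm inner0r sqrtr0.
have [Mi hMi] := hf i; exists (Mi + M) => k; rewrite big_cons.
case: (P i); first exact: le_trans (hnormD_le _ _) (lerD (hMi k) (hM k)).
by apply: le_trans (hM k) _; rewrite lerDr (le_trans (hnorm_ge0 _) (hMi k)).
Qed.

End BoundedSequences.

Lemma bounded_seq_map (R : realType) (V W : preHilbertType R) (L : V -> W) (a : R) (u : nat -> V) :
  0 <= a -> (forall v, hnorm (L v) <= a * hnorm v) ->
  bounded_seq u -> bounded_seq (fun k => L (u k)).
Proof.
move=> a0 hL [M hM]; exists (a * M) => k.
by apply: le_trans (hL _) _; rewrite ler_wpM2l.
Qed.

Lemma adjoint_bounded (R : realType) (E F : hilbertType R) (L : E -> F) (Ls : F -> E) :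
  is_bounded_linear L -> is_adjoint L Ls ->
  exists2 a : R, 0 <= a & forall v, hnorm (Ls v) <= a * hnorm v.
Proof.
move=> [_ [c hc]] hadj; pose a := Num.max c 0.
have a_ge0 : 0 <= a by rewrite le_max lexx orbT.
exists a => // v; set N := hnorm (Ls v).
(* |L^* v|^2 = <L L^* v, v> <= a |L^* v| |v| *)
have hN : N ^+ 2 <= a * N * hnorm v.
  rewrite hnorm_sqr -hadj; apply: le_trans (inner_le_hnorm _ _) _.
  rewrite ler_wpM2r ?hnorm_ge0 //; apply: le_trans (hc _) _.
  by rewrite ler_wpM2r ?hnorm_ge0 // le_max lexx.
have := hnorm_ge0 (Ls v); have := mulr_ge0 a_ge0 (hnorm_ge0 v); rewrite -/N; nra.
Qed.

Section ProductSpace.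
Variables (R : realType) (n : nat) (H0 : hilbertType R)
  (Hs : 'I_n.-1 -> hilbertType R) (gamma : R).
Implicit Types (p q c : prodH H0 Hs) (a b : R).

Lemma ipgDr c p q : ipg gamma c (padd p q) = ipg gamma c p + ipg gamma c q.
Proof.
rewrite /ipg /= innerDr mulrDr.
under eq_bigr do rewrite innerDr.
by rewrite big_split /=; ring.
Qed.

Lemma ipgZr c a p : ipg gamma c (pscale a p) = a * ipg gamma c p.
Proof.
rewrite /ipg /= innerZr mulrDr mulr_sumr.
by under eq_bigr do rewrite innerZr; ring.
Qed.

Lemma ipgBr c p q : ipg gamma c (psub p q) = ipg gamma c p - ipg gamma c q.
Proof.
rewrite /ipg /= innerBr.
under eq_bigr do rewrite innerBr.
by rewrite sumrB; ring.
Qed.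

Lemma ipg_sqr_shift p q c a :
  let r := psub (psub p (pscale a c)) q in
  ipg gamma r r = ipg gamma (psub p q) (psub p q)
    - 2 * a * ipg gamma c (psub p q) + a ^+ 2 * ipg gamma c c.
Proof.
rewrite /ipg /= inner_sqr_shift.
under eq_bigr do rewrite inner_sqr_shift.
rewrite big_split sumrB /= -!mulr_sumr; ring.
Qed.

Hypothesis gamma_ge0 : 0 <= gamma.

Lemma ipg_ge0 p : 0 <= ipg gamma p p.
Proof. by rewrite addr_ge0 ?mulr_ge0 ?inner_ge0 ?sumr_ge0 // => i _; exact: inner_ge0. Qed.

Lemma pnorm_sqr p : pnorm gamma p ^+ 2 = ipg gamma p p.
Proof. by rewrite sqr_sqrtr ?ipg_ge0. Qed.

Lemma pnorm_ge_fst p : gamma * hnorm p.1 ^+ 2 <= pnorm gamma p ^+ 2.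
Proof.
rewrite pnorm_sqr hnorm_sqr lerDl.
by apply: sumr_ge0 => i _; exact: inner_ge0.
Qed.

Lemma pnorm_ge_snd p i : hnorm (p.2 i) ^+ 2 <= pnorm gamma p ^+ 2.
Proof.
rewrite pnorm_sqr hnorm_sqr /ipg (bigD1 i) //= addrCA lerDl.
by rewrite addr_ge0 ?mulr_ge0 ?inner_ge0 ?sumr_ge0 // => j _; exact: inner_ge0.
Qed.

Section AffineFunctional.
Variables (f : prodH H0 Hs -> R) (c : prodH H0 Hs) (b : R).
Hypothesis f_ipg : forall p, f p = ipg gamma c p + b.

Lemma affine_fun_ipg : affine_fun f.
Proof. by move=> t p q; rewrite !f_ipg ipgDr !ipgZr; ring. Qed.

Lemma is_gradient_ipg : is_gradient gamma f c.
Proof.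
move=> p e e_gt0; exists 1; split => // h _.
suff -> : f (padd p h) - f p - ipg gamma c h = 0 by rewrite normr0 mulr_ge0 ?sqrtr_ge0 ?ltW.
by rewrite !f_ipg ipgDr; ring.
Qed.

Lemma pnorm_relaxed_projection p q (tau : R) :
  0 < f p -> f q <= 0 -> 0 <= tau <= 2 ->
  let p' := psub p (pscale (tau * f p / pnorm gamma c ^+ 2) c) in
  pnorm gamma (psub p' q) <= pnorm gamma (psub p q).
Proof.
move=> fp_gt0 fq_le0 /andP[tau_ge0 tau_le2] /=.
rewrite -(ler_pXn2r (isT : (0 < 2)%N)) ?nnegrE ?sqrtr_ge0 // !pnorm_sqr ipg_sqr_shift.
set a := tau * f p / ipg gamma c c.
have a_ge0 : 0 <= a by rewrite divr_ge0 ?mulr_ge0 ?ipg_ge0 // ltW.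
have a2 : a ^+ 2 * ipg gamma c c = a * (tau * f p).
  have [c0|c_neq0] := eqVneq (ipg gamma c c) 0.
    by rewrite /a c0 invr0 !(mulr0, mul0r).
  by rewrite /a expr2 -!mulrA mulVf // mulr1.
have fpq : ipg gamma c (psub p q) = f p - f q by rewrite ipgBr !f_ipg; ring.
rewrite a2 fpq.
have := mulr_ge0 a_ge0 (ltW fp_gt0).
have : 0 <= a * - f q by rewrite mulr_ge0 // oppr_ge0.
nra.
Qed.

End AffineFunctional.

End ProductSpace.

Lemma resolvent_step_residual (R : realType) (V : preHilbertType R) (rho : R)
    (u w bu cu x a l y bx dx : V) :
  rho != 0 -> u + rho *: w - rho *: (bu + cu) - x = rho *: (a + l) ->
  y = rho^-1 *: (u - x) + w + (bx - bu) + (dx - l) ->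
  a = y - bx - cu - dx.
Proof.
move=> rho_neq0 step ->; apply: inner_inj => t.
have := congr1 (inner t) step; rewrite !(innerDr, innerNr, innerZr) => e.
have -> : inner t a = rho^-1 * (rho * (inner t a + inner t l)) - inner t l by field.
by rewrite -e; field.
Qed.

Section Block.
Variables (R : realType) (H0 E : hilbertType R).
Implicit Types (d : opdata E) (g u x y w : E).

Lemma ps_block_graph thl thh rhohat deltahat (G : H0 -> E) d zk wk rho x y :
  admissible d -> ps_block thl thh rhohat deltahat G d zk wk rho x y ->
  oA d x (y - oB d x - oC d (G zk) - oD d x).
Proof.
move=> [_ _ _ _ [_ D0]] [blk_i [blk_ii blk_iii]].
case: (pselect (inT d (G zk) wk)) => hT; first by have [_ -> ->] := blk_i hT.
case hD: (oinD d).
  have [rho_gt0 [_ [[a [ha ->]] step]] _ ->] := blk_ii hT hD.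
  by rewrite -(resolvent_step_residual (lt0r_neq0 rho_gt0) step erefl).
(* Case (iii) is case (ii) with [D = 0] and a vanishing linearization. *)
have [rho_gt0 [a [ha step]] ->] := blk_iii hT (negbT hD).
rewrite -(addr0 a) in step; rewrite (D0 (negbT hD)).2.
set Y := (X in oA d x (X - _ - _ - _)).
have := resolvent_step_residual (y := Y + (0 - 0)) (lt0r_neq0 rho_gt0) step erefl.
by rewrite subrr addr0 => <-.
Qed.

Lemma cocoercive_inner_le (beta : \bar R) (C : E -> E) g u x :
  (0 < beta)%E -> cocoercive beta C ->
  inner (g - x) (C u - C g) <= inv4_beta beta * hnorm (x - u) ^+ 2.
Proof.
case: beta => [r | |] //=; last by move=> _ C_cst; rewrite (C_cst u g) subrr inner0r mul0r.
rewrite lte_fin => r_gt0 /(_ u g); rewrite hnorm_sqr.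
set dC := C u - C g => coc.
have split_gx : inner (g - x) dC = inner (u - x) dC - inner (u - g) dC.
  by rewrite !innerBl; ring.
(* AM-GM: [0 <= |(u - x) - 2 r dC|^2] *)
have := inner_ge0 (u - x - (2 * r) *: dC - 0); rewrite inner_sqr_shift !subr0.
have -> : x - u = - (u - x) by rewrite opprB.
rewrite hnorm_sqr innerNl innerNr opprK split_gx [inner dC _]innerC => amgm.
rewrite -(ler_pM2l (_ : 0 < 4 * r)) ?mulr_gt0 // mulrA mulfV ?gt_eqF ?mulr_gt0 // mul1r.
nra.
Qed.

Lemma inner_le_of_graph d g u x y w :
  admissible d -> oA d x (y - oB d x - oC d u - oD d x) -> inT d g w ->
  inner (g - x) (y - w) <= inv4_beta (obeta d) * hnorm (x - u) ^+ 2.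
Proof.
move=> [[monA _] [monB _] [beta_gt0 coc] [monD _ _ _ _] _] hx hg.
have := monA _ _ _ _ hx hg; have := monB x g; have := monD x g.
have := cocoercive_inner_le g u x beta_gt0 coc.
rewrite -[x - g]opprB !innerNl !innerBr; lra.
Qed.

End Block.

Section AlgorithmPS.
Variables (R : realType) (n : nat) (H0 : hilbertType R)
  (Hs : 'I_n.-1 -> hilbertType R)
  (G : forall i : 'I_n.-1, H0 -> Hs i) (Gs : forall i : 'I_n.-1, Hs i -> H0)
  (d : forall i : 'I_n.-1, opdata (Hs i)) (dn : opdata H0)
  (taul tauh thl thh rhohat deltahat gamma : R)
  (z : nat -> H0) (w : nat -> forall i : 'I_n.-1, Hs i)
  (rho : nat -> 'I_n.-1 -> R) (rhon : nat -> R)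
  (x y : nat -> forall i : 'I_n.-1, Hs i) (xn yn : nat -> H0)
  (tau : nat -> R).
Arguments G : clear implicits.
Arguments Gs : clear implicits.
Arguments d : clear implicits.
Arguments w : clear implicits.
Arguments x : clear implicits.
Arguments y : clear implicits.

Local Notation phi := (ps_phi G Gs d dn x y xn yn z).
Local Notation grad := (ps_grad G Gs x y xn yn gamma).
Local Notation "'pk' k" := ((z k, w k) : prodH H0 Hs) (at level 10, k at level 9).
Local Notation iterates := (ps_iterates G Gs d dn taul tauh thl thh rhohat
  deltahat gamma z w rho rhon x y xn yn tau).

Hypothesis gamma_gt0 : 0 < gamma.

Lemma ps_phi_ipg k p : phi k p = ipg gamma (grad k) p + phi k (0, fun=> 0).
Proof.
rewrite /ps_phi /ipg /= inner0l.
under [\sum_(i < n.-1) inner 0 _]eq_bigr do rewrite inner0l.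
rewrite big1_eq innerZl mulrA mulfV ?gt_eqF // mul1r innerC.
under [X in _ = _ + X + _]eq_bigr do rewrite innerC.
ring.
Qed.

Lemma ps_pi_pnorm k : pnorm gamma (grad k) ^+ 2 = ps_pi G Gs x y xn yn gamma k.
Proof.
rewrite pnorm_sqr ?ltW // /ipg /ps_pi /= innerZl innerZr hnorm_sqr.
rewrite mulrA mulrA mulfV ?gt_eqF // mul1r.
by under eq_bigr do rewrite -hnorm_sqr.
Qed.

Hypothesis G_adjoint : forall i, is_adjoint (G i) (Gs i).

Lemma ps_phi_blocks k (p : prodH H0 Hs) :
  phi k p =
    \sum_(i < n.-1) (inner (G i p.1 - x k i) (y k i - p.2 i)
                     - inv4_beta (obeta (d i)) * hnorm (x k i - G i (z k)) ^+ 2)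
    + (inner (p.1 - xn k) (yn k - wn_of Gs p)
       - inv4_beta (obeta dn) * hnorm (xn k - z k) ^+ 2).
Proof.
have per_index :
    \sum_(i < n.-1) inner p.1 (Gs i (y k i))
    + \sum_(i < n.-1) inner (p.2 i) (x k i - G i (xn k))
    - \sum_(i < n.-1) (inner (x k i) (y k i)
                      + inv4_beta (obeta (d i)) * hnorm (x k i - G i (z k)) ^+ 2)
  = \sum_(i < n.-1) (inner (G i p.1 - x k i) (y k i - p.2 i)
                    - inv4_beta (obeta (d i)) * hnorm (x k i - G i (z k)) ^+ 2)
    + \sum_(i < n.-1) inner (p.1 - xn k) (Gs i (p.2 i)).
  rewrite -!big_split -sumrB; apply: eq_bigr => i _ /=.
  rewrite !(innerBl, innerBr) -!G_adjoint ![inner (p.2 i) _]innerC; ring.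
rewrite /ps_phi /ps_v /ps_u /wn_of opprK innerDr inner_sumr.
rewrite innerDr inner_sumr [inner (p.1 - xn k) _]innerBl; lra.
Qed.

Hypotheses (d_adm : forall i, admissible (d i)) (dn_adm : admissible dn).
Hypothesis ps : iterates.

Lemma ps_phi_extsol_le0 k p : extsol G Gs d dn p -> phi k p <= 0.
Proof.
move=> [p_sol pn_sol]; have [blk [blkn _]] := ps k.
have le_blocks : \sum_(i < n.-1) (inner (G i p.1 - x k i) (y k i - p.2 i)
    - inv4_beta (obeta (d i)) * hnorm (x k i - G i (z k)) ^+ 2) <= 0.
  apply: sumr_le0 => i _; rewrite subr_le0.
  exact: inner_le_of_graph (d_adm i) (ps_block_graph (d_adm i) (blk i)) (p_sol i).
have le_last := inner_le_of_graph (u := z k) dn_adm (ps_block_graph dn_adm blkn) pn_sol.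
rewrite ps_phi_blocks; lra.
Qed.

Lemma ps_iterates_step k : 0 < phi k (pk k) ->
  pk k.+1 = psub (pk k) (pscale (tau k * phi k (pk k) / pnorm gamma (grad k) ^+ 2) (grad k)).
Proof.
have [_ [_ [step _]]] := ps k; move=> /step[_ -> w_next].
rewrite /psub /pscale /= scalerA ps_pi_pnorm [_ * gamma^-1]mulrC.
by congr pair; apply: functional_extensionality_dep => i; rewrite w_next.
Qed.

Lemma ps_iterates_stay k : ~ 0 < phi k (pk k) -> pk k.+1 = pk k.
Proof.
have [_ [_ [_ stay]]] := ps k; move=> /stay[-> w_next].
by congr pair; apply: functional_extensionality_dep => i; rewrite w_next.
Qed.

Hypotheses (taul_gt0 : 0 < taul) (tauh_le2 : tauh <= 2).

Lemma ps_iterates_fejer q k :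
  (forall k, phi k q <= 0) ->
  pnorm gamma (psub (pk k) q) <= pnorm gamma (psub (pk 0%N) q).
Proof.
move=> q_sep; elim: k => [|k IH] //; apply: le_trans IH.
have [phi_gt0 | phi_le0] := boolP (0 < phi k (pk k)); last first.
  by rewrite (ps_iterates_stay (negP phi_le0)).
have [_ [_ [/(_ phi_gt0) [/andP[tau_ge tau_le] _ _] _]]] := ps k.
rewrite ps_iterates_step //.
apply: (pnorm_relaxed_projection (ltW gamma_gt0) (ps_phi_ipg k)) => //.
by rewrite (le_trans (ltW taul_gt0) tau_ge) (le_trans tau_le tauh_le2).
Qed.

End AlgorithmPS.
Theorem proposition4p2 (R : realType) (n : nat) (H0 : hilbertType R)
  (Hs : 'I_n.-1 -> hilbertType R)
  (G : forall i : 'I_n.-1, H0 -> Hs i) (Gs : forall i : 'I_n.-1, Hs i -> H0)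
  (d : forall i : 'I_n.-1, opdata (Hs i)) (dn : opdata H0)
  (taul tauh thl thh rhohat deltahat gamma : R)
  (z : nat -> H0) (w : nat -> forall i : 'I_n.-1, Hs i)
  (rho : nat -> 'I_n.-1 -> R) (rhon : nat -> R)
  (x y : nat -> forall i : 'I_n.-1, Hs i) (xn yn : nat -> H0)
  (tau : nat -> R) :
  (2 <= n)%N ->
  (* (A1): G_i bounded linear with adjoint G_i^*; G_n = I *)
  (forall i, is_bounded_linear (G i)) ->
  (forall i, is_adjoint (G i) (Gs i)) ->
  (* (A2)-(A5), (A7) *)
  (forall i, admissible (d i)) -> admissible dn ->
  (* (A6) *)
  (exists (z0 : H0) (ws : forall i : 'I_n.-1, Hs i) (wN : H0),
     [/\ forall i, inT (d i) (G i z0) (ws i), inT dn z0 wN &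
         \sum_(i < n.-1) Gs i (ws i) + wN = 0]) ->
  (* parameters of Algorithm PS *)
  0 < taul -> taul < tauh -> tauh < 2 ->
  0 < thl -> thl < thh -> thh < 2 ->
  0 < rhohat -> 0 < deltahat -> 0 < gamma ->
  ps_iterates G Gs d dn taul tauh thl thh rhohat deltahat gamma
    z w rho rhon x y xn yn tau ->
  let phi := ps_phi G Gs d dn x y xn yn z in
  let grad := ps_grad G Gs x y xn yn gamma in
  let pk := fun k : nat => ((z k, w k) : prodH H0 Hs) in
  (* (a) *)
  (forall k, [/\ affine_fun (phi k), is_gradient gamma (phi k) (grad k) &
                 pnorm gamma (grad k) ^+ 2 = ps_pi G Gs x y xn yn gamma k]) /\
  (* (b) *)
  (forall k (p : prodH H0 Hs),
     phi k p =
       \sum_(i < n.-1) (inner (G i p.1 - x k i) (y k i - p.2 i)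
                        - inv4_beta (obeta (d i)) * hnorm (x k i - G i (z k)) ^+ 2)
       + (inner (p.1 - xn k) (yn k - wn_of Gs p)
          - inv4_beta (obeta dn) * hnorm (xn k - z k) ^+ 2)) /\
  (* (c) *)
  (forall k (p : prodH H0 Hs), extsol G Gs d dn p -> phi k p <= 0) /\
  (* (d) *)
  (forall k,
     (0 < phi k (pk k) ->
        pk k.+1 = psub (pk k)
          (pscale (tau k * phi k (pk k) / pnorm gamma (grad k) ^+ 2) (grad k))) /\
     (~ 0 < phi k (pk k) -> pk k.+1 = pk k)) /\
  (* (e) *)
  [/\ exists M : R, forall k, hnorm (z k) <= M,
      forall i, exists M : R, forall k, hnorm (w k i) <= M &
      exists M : R, forall k, hnorm (wn_of Gs (pk k)) <= M].
Proof.
move=> _ G_bdd G_adj d_adm dn_adm [z0 [ws [wN [ws_sol wN_sol ws_sum]]]]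
  taul_gt0 _ tauh_lt2 _ _ _ _ _ gamma_gt0 ps /=.
have phi_ipg k := ps_phi_ipg G Gs d dn z x y xn yn gamma_gt0 k.
have phi_sep k := ps_phi_extsol_le0 G_adj d_adm dn_adm ps k.
split.
  move=> k; split; [exact: affine_fun_ipg (phi_ipg k) |
    exact: is_gradient_ipg (phi_ipg k) | exact: ps_pi_pnorm].
split; first exact: ps_phi_blocks.
split; first exact: phi_sep.
split.
  by move=> k; split; [exact: ps_iterates_step | exact: ps_iterates_stay].
pose q : prodH H0 Hs := (z0, ws).
have q_sol : extsol G Gs d dn q.
  split=> //; rewrite /wn_of /=; move/eqP: ws_sum.
  by rewrite addrC addr_eq0 => /eqP <-.
have q_sep k := phi_sep k q q_sol.
pose D := pnorm gamma (psub (z 0%N, w 0%N) q).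
have dist k : pnorm gamma (psub (z k, w k) q) ^+ 2 <= D ^+ 2.
  rewrite ler_pXn2r ?nnegrE ?sqrtr_ge0 // /D.
  exact: (ps_iterates_fejer gamma_gt0 ps taul_gt0 (ltW tauh_lt2) k q_sep).
have w_bdd i : bounded_seq (fun k => w k i).
  apply: (bounded_seq_subr (c := ws i)); apply: (bounded_seq_of_sqr (M := D ^+ 2)) => k.
  exact: le_trans (pnorm_ge_snd (ltW gamma_gt0) _ i) (dist k).
split => //.
- apply: (bounded_seq_subr (c := z0)); apply: (bounded_seq_of_sqr (M := D ^+ 2 / gamma)) => k.
  by rewrite ler_pdivlMr // mulrC; exact: le_trans (pnorm_ge_fst (ltW gamma_gt0) _) (dist k).
- apply: bounded_seqN; apply: bounded_seq_sum => i.
  have [a a_ge0 Gs_bdd] := adjoint_bounded (G_bdd i) (G_adj i).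
  exact: bounded_seq_map a_ge0 Gs_bdd (w_bdd i).
Qed.
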